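(* Let $S$ be a finitely generated submonoid of $\mathbb N^d$ that has a Frobenius element $\mathbf f$ and is irreducible. Then either $\mathrm{PF}(S)=\{\mathbf f\}$ or $\mathrm{PF}(S)=\{\mathbf f,\mathbf f/2\}$.
   Context: $\mathrm{pos}(S)$ is the rational cone generated by $S$ (nonnegative rational combinations of its generators), $\mathcal H(S)=(\mathrm{pos}(S)\setminus S)\cap\mathbb N^d$, and $\mathrm{PF}(S)=\{\mathbf a\in\mathcal H(S):\mathbf a+(S\setminus\{0\})\subseteq S\}$. A term order on $\mathbb N^d$ is a total order compatible with addition with $0$ least; $\mathbf f\in\mathcal H(S)$ is a Frobenius element if $\mathbf f=\max_\prec\mathcal H(S)$ for some term order $\prec$. $S$ is irreducible if it cannot be expressed as the intersection of two submonoids of $\mathbb N^d$ each containing it properly. *)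

From mathcomp Require Import all_boot all_order all_algebra.
Set Implicit Arguments. Unset Strict Implicit. Unset Printing Implicit Defensive.
Import Order.TTheory GRing.Theory Num.Theory.

Definition vec (d : nat) := {ffun 'I_d -> nat}.
Definition vzero (d : nat) : vec d := [ffun => 0%N].
Definition vadd (d : nat) (a b : vec d) : vec d := [ffun i => (a i + b i)%N].

Definition submonoid (d : nat) (S : vec d -> Prop) : Prop :=
  S (vzero d) /\ forall a b, S a -> S b -> S (vadd a b).

Definition fin_gen (d : nat) (S : vec d -> Prop) : Prop :=
  exists (n : nat) (g : 'I_n -> vec d),
    forall x, S x <-> exists c : 'I_n -> nat,
      forall j, x j = (\sum_(i < n) c i * g i j)%N.

Definition in_pos (d : nat) (S : vec d -> Prop) (x : vec d) : Prop :=
  exists (n : nat) (s : 'I_n -> vec d) (q : 'I_n -> rat),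
    (forall i, S (s i)) /\ (forall i, 0 <= q i)%R /\
    forall j, ((x j)%:R = \sum_(i < n) q i * (s i j)%:R)%R.

Definition holes (d : nat) (S : vec d -> Prop) (x : vec d) : Prop :=
  in_pos S x /\ ~ S x.

Definition PF (d : nat) (S : vec d -> Prop) (a : vec d) : Prop :=
  holes S a /\ forall s, S s -> s <> vzero d -> S (vadd a s).

(* Term order (given as its reflexive version "le"): total order on N^d,
   compatible with addition, with 0 least. *)
Definition term_order (d : nat) (le : vec d -> vec d -> Prop) : Prop :=
  (forall a, le a a) /\
  (forall a b, le a b -> le b a -> a = b) /\
  (forall a b c, le a b -> le b c -> le a c) /\
  (forall a b, le a b \/ le b a) /\
  (forall a b c, le a b -> le (vadd a c) (vadd b c)) /\
  (forall a, le (vzero d) a).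

Definition frobenius_elt (d : nat) (S : vec d -> Prop) (f : vec d) : Prop :=
  exists le, term_order le /\ holes S f /\ forall h, holes S h -> le h f.

Definition irreducible_monoid (d : nat) (S : vec d -> Prop) : Prop :=
  forall T1 T2 : vec d -> Prop, submonoid T1 -> submonoid T2 ->
    (forall x, S x <-> T1 x /\ T2 x) ->
    (forall x, T1 x -> S x) \/ (forall x, T2 x -> S x).

From mathcomp Require Import all_boot all_order all_algebra.
From mathcomp Require Import zify.
From Stdlib Require Import Classical.
Import Order.TTheory GRing.Theory Num.Theory.
Set Implicit Arguments. Unset Strict Implicit. Unset Printing Implicit Defensive.

(* Since f is the largest hole for a term order, f + c lies in S for every
   nonzero c in pos(S); hence f is pseudo-Frobenius and 2f is in S, so that
   S ∪ {f} is a monoid.  If a ∉ S satisfies a + (S \ {0}) ⊆ S, then S ∪ ℕ_{>0}a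
   is a monoid too, and irreducibility makes the two extensions meet outside S:
   f = k a with k > 0.  For a pseudo-Frobenius g ≠ f this gives f = k g with
   k ≥ 2; the element (k-1) g is again outside S and absorbs S \ {0}, so
   f = m (k-1) g, i.e. k = m (k-1), which forces k = 2. *)

Definition vscale (d k : nat) (x : vec d) : vec d := [ffun i => k * x i]%N.

Section VectorArithmetic.
Variable d : nat.
Implicit Types (a b c x : vec d) (k m : nat).

(* Unlike [ffunP], this elaborates [a i] as in the statements below, so [lia]
   sees the same atoms in hypotheses and goals. *)
Lemma vecP a b : (forall i : 'I_d, a i = b i) <-> a = b.
Proof. by split=> [ab | -> //]; apply/ffunP. Qed.

Lemma vadd0 x : vadd (vzero d) x = x.
Proof. by apply/ffunP => i; rewrite !ffunE. Qed.

Lemma vaddC a b : vadd a b = vadd b a.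
Proof. by apply/ffunP => i; rewrite !ffunE addnC. Qed.

Lemma vaddA a b c : vadd a (vadd b c) = vadd (vadd a b) c.
Proof. by apply/ffunP => i; rewrite !ffunE addnA. Qed.

Lemma vadd_neq0 a b : b <> vzero d -> vadd a b <> vzero d.
Proof.
move=> b0 ab0; apply: b0; apply/vecP => i.
by move/vecP/(_ i): ab0; rewrite !ffunE; lia.
Qed.

Lemma vaddI a c : vadd a c = a -> c = vzero d.
Proof. by move/vecP=> ac; apply/vecP => i; move: (ac i); rewrite !ffunE; lia. Qed.

Lemma vadd_double_inj a b : vadd a a = vadd b b -> a = b.
Proof. by move/vecP=> ab; apply/vecP => i; move: (ab i); rewrite !ffunE; lia. Qed.

Lemma vscale1 x : vscale 1 x = x.
Proof. by apply/ffunP => i; rewrite !ffunE mul1n. Qed.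

Lemma vscale2 x : vscale 2 x = vadd x x.
Proof. by apply/ffunP => i; rewrite !ffunE mul2n addnn. Qed.

Lemma vscale0 x : vscale 0 x = vzero d.
Proof. by apply/ffunP => i; rewrite !ffunE. Qed.

Lemma vscaleS k x : vscale k.+1 x = vadd x (vscale k x).
Proof. by apply/ffunP => i; rewrite !ffunE mulSn. Qed.

Lemma vscaleD k m x : vscale (k + m) x = vadd (vscale k x) (vscale m x).
Proof. by apply/ffunP => i; rewrite !ffunE mulnDl. Qed.

Lemma vscaleA k m x : vscale k (vscale m x) = vscale (k * m) x.
Proof. by apply/ffunP => i; rewrite !ffunE mulnA. Qed.

Lemma vscale_inj x : x <> vzero d -> injective (fun k => vscale k x).
Proof.
move=> x0 k m /vecP km; case: (pickP (fun i => x i != 0%N)) => [i xi0 | x_eq0].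
  by move: (km i); rewrite !ffunE; move/eqP: xi0; nia.
by case: x0; apply/vecP => i; move/negbFE/eqP: (x_eq0 i); rewrite ffunE.
Qed.

Lemma vscale_neq0 k x : (0 < k)%N -> x <> vzero d -> vscale k x <> vzero d.
Proof. by move=> k0 x0; rewrite -(vscale0 x) => /(vscale_inj x0); lia. Qed.

End VectorArithmetic.

Lemma term_order_max_add d (le : vec d -> vec d -> Prop) (P : vec d -> Prop) f c :
  term_order le -> (forall h, P h -> le h f) -> P (vadd f c) -> c = vzero d.
Proof.
move=> [_ [le_anti [_ [_ [leD le0]]]]] f_max Pfc; apply: (@vaddI d f).
apply: le_anti; first exact: f_max.
by have := leD _ _ f (le0 c); rewrite vadd0 vaddC.
Qed.

Lemma in_posS d (S : vec d -> Prop) s : S s -> in_pos S s.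
Proof.
move=> Ss; exists 1%N, (fun _ => s), (fun _ => 1%R); split=> [_ // | ]; split=> [_ // | j].
by rewrite big_ord1 mul1r.
Qed.

Lemma in_posD d (S : vec d -> Prop) x y :
  in_pos S x -> in_pos S y -> in_pos S (vadd x y).
Proof.
move=> [n1 [s1 [q1 [S1 [q1_ge0 x_def]]]]] [n2 [s2 [q2 [S2 [q2_ge0 y_def]]]]].
exists (n1 + n2)%N, (fun i => match split i with inl a => s1 a | inr b => s2 b end),
  (fun i => match split i with inl a => q1 a | inr b => q2 b end).
split=> [i | ]; first by case: (split i).
split=> [i | j]; first by case: (split i).
rewrite big_split_ord ffunE natrD x_def y_def.
by congr (_ + _)%R; apply: eq_bigr => i _; rewrite ?(unsplitK (inl _)) ?(unsplitK (inr _)).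
Qed.

Section Extensions.
Variables (d : nat) (S : vec d -> Prop).
Hypothesis S_monoid : submonoid S.

Definition shifts_into (a : vec d) : Prop :=
  forall s, S s -> s <> vzero d -> S (vadd a s).

Lemma shifts_intoD a b : shifts_into a -> shifts_into b -> shifts_into (vadd a b).
Proof.
by move=> sa sb s Ss s0; rewrite -vaddA; apply: sa; [apply: sb | apply: vadd_neq0].
Qed.

Lemma shifts_intoZ k a : shifts_into a -> shifts_into (vscale k a).
Proof.
move=> sa; elim: k => [|k IHk]; last by rewrite vscaleS; apply: shifts_intoD.
by move=> s Ss _; rewrite vscale0 vadd0.
Qed.

Lemma submonoid_adjoin (A : vec d -> Prop) :
  (forall a, A a -> shifts_into a) ->
  (forall a b, A a -> A b -> S (vadd a b) \/ A (vadd a b)) ->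
  submonoid (fun x => S x \/ A x).
Proof.
case: S_monoid => S0 SD A_shifts AD.
have SA x a : S x -> A a -> S (vadd a x) \/ A (vadd a x).
  move=> Sx Aa; case: (classic (x = vzero d)) => [-> | x0].
    by right; rewrite vaddC vadd0.
  by left; apply: A_shifts.
split=> [|x y [Sx | Ax] [Sy | Ay]]; first by left.
- by left; apply: SD.
- by rewrite vaddC; apply: SA.
- exact: SA.
- exact: AD.
Qed.

Lemma submonoid_adjoin1 a :
  shifts_into a -> S (vadd a a) -> submonoid (fun x => S x \/ x = a).
Proof. by move=> sa Saa; apply: submonoid_adjoin => [_ -> | _ _ -> ->]; [|left]. Qed.

Lemma submonoid_adjoin_multiples a : shifts_into a ->
  submonoid (fun x => S x \/ exists2 k, (0 < k)%N & x = vscale k a).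
Proof.
move=> sa; apply: submonoid_adjoin => [_ [k _ ->] | _ _ [k k0 ->] [m _ ->]].
  exact: shifts_intoZ.
by right; exists (k + m)%N; rewrite ?vscaleD //; lia.
Qed.

Lemma irreducible_adjoin1 (T : vec d -> Prop) a :
  irreducible_monoid S -> submonoid (fun x => S x \/ x = a) -> ~ S a ->
  submonoid T -> (forall x, S x -> T x) -> (exists2 y, T y & ~ S y) -> T a.
Proof.
move=> S_irr Sa_monoid Sa T_monoid ST [y Ty Sy]; apply: NNPP => Ta.
have S_meet x : S x <-> (S x \/ x = a) /\ T x.
  by split=> [Sx | [[Sx | ->] Tx]] //; split; [left | apply: ST].
by case: (S_irr _ _ Sa_monoid T_monoid S_meet) => [/(_ a) | /(_ y)]; auto.
Qed.

End Extensions.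

Section IrreducibleFrobenius.
Variables (d : nat) (S : vec d -> Prop) (f : vec d).
Hypotheses (S_monoid : submonoid S) (S_irr : irreducible_monoid S).
Hypothesis f_hole : holes S f.
Hypothesis no_hole_above : forall c, c <> vzero d -> ~ holes S (vadd f c).

Lemma mem_above_frobenius c : in_pos S c -> c <> vzero d -> S (vadd f c).
Proof.
move=> c_pos c0; apply: NNPP => Sfc; apply: (no_hole_above c0); split=> //.
by apply: in_posD => //; case: f_hole.
Qed.

Lemma frobenius_neq0 : f <> vzero d.
Proof. by move=> f0; case: f_hole => _; rewrite f0; case: S_monoid. Qed.

Lemma PF_frobenius : PF S f.
Proof. by split=> // s Ss s0; apply: mem_above_frobenius; first exact: in_posS. Qed.

Lemma frobenius_multiple a :
  shifts_into S a -> ~ S a -> exists2 k, (0 < k)%N & f = vscale k a.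
Proof.
move=> sa Sa; have [f_pos Sf] := f_hole.
have Sf_monoid : submonoid (fun x => S x \/ x = f).
  apply: submonoid_adjoin1 => //; first exact: PF_frobenius.2.
  exact: mem_above_frobenius f_pos frobenius_neq0.
have a_multiple : S a \/ exists2 k, (0 < k)%N & a = vscale k a.
  by right; exists 1%N; rewrite ?vscale1.
have [//|[k k0 fk]] := irreducible_adjoin1 S_irr Sf_monoid Sf
  (submonoid_adjoin_multiples S_monoid sa) (fun x Sx => or_introl Sx)
  (ex_intro2 _ _ a a_multiple Sa).
by exists k.
Qed.

Lemma PF_double g : PF S g -> g <> f -> vadd g g = f.
Proof.
move=> [[_ Sg] sg] gf; have [f_pos Sf] := f_hole.
have g0 : g <> vzero d by move=> g0; apply: Sg; rewrite g0; case: S_monoid.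
have [k k0 fk] := frobenius_multiple sg Sg.
have k1 : k <> 1%N by move=> k1; apply: gf; rewrite fk k1 vscale1.
have Sk1g : ~ S (vscale k.-1 g).
  move=> Sk1g; apply: Sf; rewrite fk -(ltn_predK k0) vscaleS.
  by apply: sg => //; apply: vscale_neq0 => //; lia.
have [m _ fm] := frobenius_multiple (shifts_intoZ k.-1 sg) Sk1g.
have k_eq : k = (m * k.-1)%N by apply: (vscale_inj g0); rewrite -fk fm vscaleA.
have k2 : k = 2%N by move: k_eq; case: m {fm} => [|[|m]]; nia.
by rewrite fk k2 vscale2.
Qed.

End IrreducibleFrobenius.

Theorem theorem4p3 (d : nat) (S : vec d -> Prop) (f : vec d) :
  submonoid S -> fin_gen S -> frobenius_elt S f -> irreducible_monoid S ->
  (forall a, PF S a <-> a = f) \/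
  (exists g : vec d, vadd g g = f /\ forall a, PF S a <-> a = f \/ a = g).
Proof.
move=> S_monoid _ [le [le_order [f_hole f_max]]] S_irr.
have no_hole_above c : c <> vzero d -> ~ holes S (vadd f c).
  by move=> c0 /(term_order_max_add le_order f_max).
have PF_half := PF_double S_monoid S_irr f_hole no_hole_above.
have PFf := PF_frobenius f_hole no_hole_above.
case: (classic (exists2 g, PF S g & g <> f)) => [[g PFg gf] | PF_f_only].
- right; exists g; split=> [|a]; first exact: PF_half.
  split=> [PFa | [-> | ->]] //; case: (classic (a = f)) => [| af]; [by left | right].
  by apply: vadd_double_inj; rewrite !PF_half.
- left=> a; split=> [PFa | ->] //; apply: NNPP => af.
  by apply: PF_f_only; exists a.
Qed.
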